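(* Let $(X,d)$ be a metric space, let $u,u_1,u_2,\ldots\in F_{USC}(X)$ and let $P$ be a dense subset of $[0,1]$. If $H([u_n]_\alpha,[u]_\alpha)\to0$ for each $\alpha\in P$, then $H_{\rm end}(u_n,u)\to0$.
   Context: A fuzzy set on $X$ is a function $u:X\to[0,1]$, with $\alpha$-cuts $[u]_\alpha=\{x: u(x)\ge\alpha\}$ for $\alpha\in(0,1]$ and $[u]_0=\overline{\{u>0\}}$. $F_{USC}(X)$ is the set of fuzzy sets with all $\alpha$-cuts ($\alpha\in[0,1]$) non-empty and closed. For non-empty closed sets $U,V$ in a metric space $(Y,\rho)$, $H(U,V)=\max\{\sup_{a\in U}\inf_{b\in V}\rho(a,b),\sup_{b\in V}\inf_{a\in U}\rho(a,b)\}$ (Hausdorff distance). $X\times[0,1]$ is metrized by $\overline{d}((x,\alpha),(y,\beta))=d(x,y)+|\alpha-\beta|$, ${\rm end}\,u=\{(x,t)\in X\times[0,1]: u(x)\ge t\}$, and $H_{\rm end}(u,v)=H({\rm end}\,u,{\rm end}\,v)$ computed with $\overline{d}$. *)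

From HB Require Import structures.
From mathcomp Require Import all_boot all_order all_algebra.
From mathcomp Require Import all_classical all_reals all_analysis.
Set Implicit Arguments. Unset Strict Implicit. Unset Printing Implicit Defensive.
Import Order.TTheory GRing.Theory Num.Theory.
Local Open Scope classical_set_scope.
Local Open Scope ring_scope.

Definition is_metric (R : realType) (T : Type) (d : T -> T -> R) : Prop :=
  (forall x y, 0 <= d x y) /\ (forall x y, d x y = 0 <-> x = y) /\
  (forall x y, d x y = d y x) /\ (forall x y z, d x z <= d x y + d y z).

Definition mclosure (R : realType) (T : Type) (d : T -> T -> R) (A : set T) : set T :=
  [set x | forall e : R, 0 < e -> exists2 y, A y & d x y < e].

Definition mclosed (R : realType) (T : Type) (d : T -> T -> R) (A : set T) : Prop :=
  mclosure d A `<=` A.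

Definition hexcess (R : realType) (T : Type) (d : T -> T -> R) (U V : set T) : \bar R :=
  ereal_sup [set ereal_inf [set (d a b)%:E | b in V] | a in U].

Definition hdist (R : realType) (T : Type) (d : T -> T -> R) (U V : set T) : \bar R :=
  maxe (hexcess d U V) (hexcess d V U).

Definition acut (R : realType) (X : Type) (d : X -> X -> R) (u : X -> R) (a : R) : set X :=
  if a == 0 then mclosure d [set x | 0 < u x] else [set x | a <= u x].

Definition FUSC (R : realType) (X : Type) (d : X -> X -> R) (u : X -> R) : Prop :=
  (forall x, 0 <= u x <= 1) /\
  (forall a : R, 0 <= a <= 1 -> acut d u a !=set0 /\ mclosed d (acut d u a)).

Definition dbar (R : realType) (X : Type) (d : X -> X -> R) (p q : X * R) : R :=
  d p.1 q.1 + `|p.2 - q.2|.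

Definition endo (R : realType) (X : Type) (u : X -> R) : set (X * R) :=
  [set p | 0 <= p.2 <= 1 /\ p.2 <= u p.1].

Definition Hend (R : realType) (X : Type) (d : X -> X -> R) (u v : X -> R) : \bar R :=
  hdist (dbar d) (endo u) (endo v).

Definition dense01 (R : realType) (P : set R) : Prop :=
  (forall p, P p -> 0 <= p <= 1) /\
  (forall x : R, 0 <= x <= 1 -> forall e : R, 0 < e -> exists2 p, P p & `|p - x| < e).

From mathcomp Require Import all_boot all_order all_algebra.
From mathcomp Require Import all_classical all_reals all_analysis.
From mathcomp Require Import lra.
Set Implicit Arguments. Unset Strict Implicit. Unset Printing Implicit Defensive.
Import Order.TTheory GRing.Theory Num.Theory.
Local Open Scope classical_set_scope.
Local Open Scope ring_scope.

(* Given e > 0, density of P yields finitely many levels 0 < q_1, ..., q_N <= 1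
   in P such that every t in [e/2, 1] lies in some [q_i, q_i + e/2), and for n
   large all the cut distances H([u_n]_{q_i}, [u]_{q_i}) are below e/2.  A point
   (x, t) of end u_n is then e-close to end u: take (x, 0) if t < e/2, and
   otherwise (y, q_i) with q_i <= t < q_i + e/2 and y a point of [u]_{q_i} that
   is e/2-close to x, which lies in [u_n]_{q_i}.  The same works with u_n and
   u exchanged. *)

Lemma cvge0_nonneg (R : realType) (T : Type) (F : set_system T) {FF : Filter F}
    (f : T -> \bar R) :
  (forall e : R, 0 < e -> \forall x \near F, (0 <= f x <= e%:E)%E) ->
  f @ F --> 0%E.
Proof.
move=> small A /nbhs_EFin /nbhs_ballP[e /= e0 eA].
apply: filterS (small (e / 2) (divr_gt0 e0 (ltr0n R 2))) => x /andP[fx0 fxe].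
have [r fxr] : exists r, f x = r%:E.
  by exists (fine (f x)); rewrite fineK // ge0_fin_numE // (le_lt_trans fxe) ?ltry.
move: fx0 fxe; rewrite /= fxr !lee_fin => r0 re; apply: eA.
rewrite /ball /= sub0r normrN ger0_norm //; lra.
Qed.

Section HausdorffDistance.
Variables (R : realType) (T : Type) (d : T -> T -> R).
Implicit Types (A B : set T) (r : R).

Lemma hexcess_le A B r :
  (forall a, A a -> exists2 b, B b & d a b <= r) -> (hexcess d A B <= r%:E)%E.
Proof.
move=> near_B; apply: ge_ereal_sup => _ [a Aa <-].
have [b Bb dab] := near_B a Aa.
by apply: ge_ereal_inf; exists (d a b)%:E; [exists b | rewrite lee_fin].
Qed.

Lemma hexcess_lt A B r a :
  (hexcess d A B < r%:E)%E -> A a -> exists2 b, B b & d a b < r.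
Proof.
move=> excess_lt Aa.
have : (ereal_inf [set (d a b)%:E | b in B] < r%:E)%E.
  by apply: le_lt_trans excess_lt; apply: ereal_sup_ubound; exists a.
by case/ereal_inf_lt => _ [b Bb <-]; rewrite lte_fin; exists b.
Qed.

Lemma hexcess_ge0 A B :
  (forall a b, 0 <= d a b) -> A !=set0 -> (0 <= hexcess d A B)%E.
Proof.
move=> d_ge0 [a Aa]; apply: le_trans (ereal_sup_ubound _) => /=; last by exists a.
by apply/ereal_infP => _ [b _ <-]; rewrite lee_fin.
Qed.

Lemma hdistC A B : hdist d A B = hdist d B A.
Proof. exact: maxC. Qed.

Lemma hexcess_le_hdist A B : (hexcess d A B <= hdist d A B)%E.
Proof. by rewrite le_max lexx. Qed.

End HausdorffDistance.

Lemma acut_neq0 (R : realType) (X : Type) (d : X -> X -> R) (u : X -> R) (a : R) :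
  a != 0 -> acut d u a = [set x | a <= u x].
Proof. by rewrite /acut => /negbTE->. Qed.

Section Endographs.
Variables (R : realType) (X : Type) (d : X -> X -> R).
Hypothesis d_refl : forall x, d x x = 0.

(* The levels must be positive: the 0-cut is the closure of the support. *)
Lemma hexcess_endo_le (v w : X -> R) (I : Type) (q : I -> R) (r delta : R) :
  (forall x, 0 <= w x) -> 0 <= r -> (forall i, 0 < q i <= 1) ->
  (forall t, delta <= t <= 1 -> exists i, q i <= t < q i + delta) ->
  (forall i, (hexcess d (acut d v (q i)) (acut d w (q i)) < r%:E)%E) ->
  (hexcess (dbar d) (endo v) (endo w) <= (r + delta)%:E)%E.
Proof.
move=> w_ge0 r_ge0 q01 q_net q_close.
apply: hexcess_le => -[x t] [/andP[/= t0 t1] /= tv]; rewrite /dbar /=.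
have [t_small | t_big] := ltP t delta.
  exists (x, 0); first by rewrite /endo /= lexx ler01 w_ge0.
  by rewrite /= d_refl subr0 ger0_norm //; lra.
have [i /andP[qt tq]] := q_net t (introT andP (conj t_big t1)).
have /andP[qi_gt0 qi_le1] := q01 i.
have := hexcess_lt (q_close i); rewrite !acut_neq0 ?gt_eqF //.
case/(_ x (le_trans qt tv)) => y qy dxy.
exists (y, q i); first by rewrite /endo /= (ltW qi_gt0) qi_le1.
by rewrite /= ger0_norm ?subr_ge0 //; lra.
Qed.

Lemma Hend_le_cuts (v w : X -> R) (I : Type) (q : I -> R) (r delta : R) :
  (forall x, 0 <= v x) -> (forall x, 0 <= w x) -> 0 <= r ->
  (forall i, 0 < q i <= 1) ->
  (forall t, delta <= t <= 1 -> exists i, q i <= t < q i + delta) ->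
  (forall i, (hdist d (acut d v (q i)) (acut d w (q i)) < r%:E)%E) ->
  (Hend d v w <= (r + delta)%:E)%E.
Proof.
move=> v_ge0 w_ge0 r_ge0 q01 q_net q_close.
rewrite /Hend /hdist ge_max; apply/andP; split.
  apply: hexcess_endo_le => // i.
  exact: le_lt_trans (hexcess_le_hdist _ _ _) (q_close i).
apply: hexcess_endo_le => // i.
by apply: le_lt_trans (q_close i); rewrite hdistC; exact: hexcess_le_hdist.
Qed.

Lemma Hend_ge0 (v w : X -> R) (x0 : X) :
  (forall x y, 0 <= d x y) -> (forall x, 0 <= v x) -> (0 <= Hend d v w)%E.
Proof.
move=> d_ge0 v_ge0; apply: le_trans (hexcess_le_hdist _ _ _).
apply: hexcess_ge0 => [a b|]; first by rewrite addr_ge0.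
by exists (x0, 0); rewrite /endo /= lexx ler01 v_ge0.
Qed.

End Endographs.

Lemma dense01_finite_net (R : realType) (P : set R) (delta : R) :
  dense01 P -> 0 < delta ->
  exists N (q : 'I_N -> R), (forall i, P (q i) /\ 0 < q i <= 1) /\
    (forall t, delta <= t <= 1 -> exists i, q i <= t < q i + delta).
Proof.
move=> [P01 P_dense] delta_gt0.
(* With h = 1/N < delta/3, q i approximates (i+1) h within h/2; a level t in
   [m h, (m+1) h) with m >= 3 is then served by q (m-2). *)
pose N := (Num.truncn (3 / delta)).+1.
pose h : R := N%:R^-1.
have N_gt0 : (0 : R) < N%:R by rewrite ltr0n.
have h_gt0 : 0 < h by rewrite invr_gt0.
have Nh : N%:R * h = 1 by rewrite mulfV // gt_eqF.
have h3 : 3 * h < delta.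
  have : 3 / delta < N%:R by exact: truncnS_gt.
  rewrite ltr_pdivrMr // -(ltr_pM2r h_gt0) mulrAC Nh mul1r; lra.
have approx (i : 'I_N) : exists q, P q /\ `|q - i.+1%:R * h| < h / 2.
  have : 0 <= i.+1%:R * h <= 1.
    by rewrite mulr_ge0 ?(ltW h_gt0) //= -[X in _ <= X]Nh ler_pM2r // ler_nat ltn_ord.
  by move=> /P_dense /(_ (h / 2) (divr_gt0 h_gt0 (ltr0n R 2))) [q]; exists q.
have [q qP] := choice approx.
exists N, q; split=> [i | t /andP[delta_t t1]].
  have [Pq] := qP i; rewrite ltr_norml => /andP[lo _].
  have /andP[_ ->] := P01 _ Pq; rewrite andbT; split=> //.
  have : h <= i.+1%:R * h by rewrite ler_peMl ?(ltW h_gt0) // ler1n.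
  lra.
pose m := Num.truncn (t * N%:R).
have /andP[mt tm] : m%:R * h <= t < m.+1%:R * h.
  rewrite ler_pdivrMr // ltr_pdivlMr //; apply: truncn_itv.
  by rewrite mulr_ge0 ?(ltW N_gt0) // (le_trans (ltW delta_gt0)).
have m_ge3 : (3 <= m)%N.
  have : 3%:R < m.+1%:R :> R by rewrite -(ltr_pM2r h_gt0); lra.
  by rewrite ltr_nat ltnS.
have m_leN : (m <= N)%N by rewrite -(ler_nat R) -(ler_pM2r h_gt0) Nh; lra.
clearbody m; case: m m_ge3 m_leN mt tm => [|[|[|k]]] // _ kN mt tm.
exists (Ordinal (ltnW kN)); have [_] := qP (Ordinal (ltnW kN)).
move: (q _) => qk; rewrite /= ltr_norml => /andP[lo hi].
move: mt tm lo hi; rewrite -[k.+4]addn4 -[k.+3]addn3 -[k.+2]addn2 !natrD !mulrDl.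
have : 0 <= k%:R * h by rewrite mulr_ge0 ?(ltW h_gt0).
lra.
Qed.

Theorem theorem4p3 (R : realType) (X : Type) (d : X -> X -> R)
  (u : X -> R) (us : nat -> X -> R) (P : set R) :
  is_metric d -> FUSC d u -> (forall n, FUSC d (us n)) -> dense01 P ->
  (forall a, P a ->
     (fun n => hdist d (acut d (us n) a) (acut d u a)) @ \oo --> 0%E) ->
  (fun n => Hend d (us n) u) @ \oo --> 0%E.
Proof.
move=> [d_ge0 [d_eq0 _]] [u01 u_cuts] us_fusc P_dense cuts_cvg.
have d_refl x : d x x = 0 by apply/d_eq0.
have u_ge0 x : 0 <= u x by case/andP: (u01 x).
have us_ge0 n x : 0 <= us n x by case/andP: ((us_fusc n).1 x).
have [x0 _] : acut d u 1 !=set0 by apply: (u_cuts 1 _).1; rewrite ler01 lexx.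
apply: cvge0_nonneg => e e_gt0.
have e2_gt0 : 0 < e / 2 by rewrite divr_gt0.
have [N [q [qP q_net]]] := dense01_finite_net P_dense e2_gt0.
have : \forall n \near \oo, forall i,
    (hdist d (acut d (us n) (q i)) (acut d u (q i)) < (e / 2)%:E)%E.
  apply: filter_forall => i.
  exact: cuts_cvg _ (qP i).1 _ (open_ereal_lt' (e2_gt0 : (0 < (e / 2)%:E)%E)).
apply: filterS => n cuts_close.
rewrite (Hend_ge0 _ x0) //= [e in e%:E](splitr e).
apply: Hend_le_cuts q_net cuts_close => // [|i]; first exact: ltW.
exact: (qP i).2.
Qed.
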